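(* Let $F_{i,l}(x)$, for integers $i\ge0$ and $-1\le l\le i+1$, be the polynomials defined recursively by $F_{0,0}(x)=1$, $F_{i,-1}(x)=F_{i,i+1}(x)=0$, and $$F_{i+1,l}(x)=F_{i,l-1}(x)-(2i+1-l)\,x\,F_{i,l}(x)+(x^2-4)F'_{i,l}(x)\quad(0\le l\le i+1).$$ Then (1) $F_{i,i}(x)=1$ for all $i\ge0$; (2) for each $k\ge0$, $F_{i+k,i}(x)$ has degree $k$ for every $i\ge0$; (3) $F_{i+1,i}(x)=-x\binom{i+2}{2}$ for all $i\ge0$.
   Context: $F'_{i,l}$ denotes the derivative of $F_{i,l}$ with respect to $x$. *)

From mathcomp Require Import all_boot all_order all_algebra.
Set Implicit Arguments. Unset Strict Implicit. Unset Printing Implicit Defensive.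
Import GRing.Theory Num.Theory.
Local Open Scope ring_scope.

(* The index l = -1
   is handled by the boundary convention F_{i,-1} = 0 (case l = 0 below),
   and F_{i,l} = 0 for l > i (in particular F_{i,i+1} = 0). *)
Fixpoint F (i : nat) : nat -> {poly int} :=
  match i with
  | 0 => fun l => if l == 0%N then 1 else 0
  | i'.+1 => fun l =>
      if (l <= i'.+1)%N then
        (if l is l'.+1 then F i' l' else 0)
        - (((2 * i' + 1)%:R - l%:R) : int) *: ('X * F i' l)
        + ('X ^+ 2 - 4%:P) * (F i' l)^`()
      else 0
  end.

From mathcomp Require Import all_boot all_order all_algebra.
From mathcomp Require Import zify ring.
Import Order.TTheory GRing.Theory Num.Theory.
Local Open Scope ring_scope.

(* In the recurrence, the
   coefficients of x^(n+1-l) coming from -(2n+1-l) x F_{n,l} and from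
   x^2 F'_{n,l} add up to -(n+1) times the top coefficient c_{n,l}, so
   c_{n+1,l} = c_{n,l-1} - (n+1) c_{n,l}.  Hence (-1)^(n-l) c_{n,l} > 0 by
   induction, and F_{n,l} has degree exactly n - l. *)

Lemma F_eq0 n l : (n < l)%N -> F n l = 0.
Proof. by case: n => [|n] /= lt_nl; [case: l lt_nl | rewrite leqNgt lt_nl]. Qed.

Lemma FS n l : F n.+1 l =
  if (l <= n.+1)%N then
    (if l is l'.+1 then F n l' else 0)
    - (((2 * n + 1)%:R - l%:R) : int) *: ('X * F n l)
    + ('X ^+ 2 - 4%:P) * (F n l)^`()
  else 0.
Proof. by []. Qed.

Lemma F_diag i : F i i = 1.
Proof.
elim: i => [|i IH] //=.
by rewrite leqnn IH F_eq0 // mulr0 scaler0 deriv0 mulr0 subr0 addr0.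
Qed.

Lemma F_subdiag i : F i.+1 i = - ('C(i + 2, 2)%:R *: 'X).
Proof.
elim: i => [|i IH]; first by rewrite /= derivC mulr0 addr0 mulr1 sub0r subr0 scale1r.
rewrite FS leqnSn IH F_diag derivC mulr0 addr0 mulr1 addSn binS bin1.
by rewrite -!scalerN -!scalerDl; congr (_ *: _); lia.
Qed.

Lemma coef_FS n l j : (l <= n.+1)%N -> (F n.+1 l)`_j =
  (if l is l'.+1 then (F n l')`_j else 0)
  - ((2 * n + 1)%:R - l%:R) * (if j is m.+1 then (F n l)`_m else 0)
  + (if j is m.+1 then (F n l)`_m *+ m else 0)
  - 4 * ((F n l)`_j.+1 *+ j.+1).
Proof.
move=> le_l; rewrite FS le_l coefD coefB coefZ coefXM (mulrBl _ ('X^2)).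
rewrite coefB coefXnM coefCM !coef_deriv !addrA; congr (_ - _).
by case: l le_l => [|l] _; case: j => [|[|m]] /=;
  rewrite ?coef0 ?mulr0 ?addr0 ?mulr0n ?subr0 ?subSS ?subn0.
Qed.

Lemma size_F_le n l : (size (F n l) <= (n - l).+1)%N.
Proof.
elim: n l => [|n IH] l; first by case: l => [|l]; rewrite /= ?size_poly1 ?size_poly0.
have [lt_nl | le_l] := ltnP n.+1 l; first by rewrite F_eq0 ?size_poly0.
have [-> | ne_l] := eqVneq l n.+1; first by rewrite F_diag size_poly1.
have {le_l ne_l} le_ln : (l <= n)%N by lia.
have F_coef0 l0 m : (n - l0 < m)%N -> (F n l0)`_m = 0.
  by move=> lt_m; apply: nth_default; apply: leq_trans (IH l0) lt_m.
apply/leq_sizeP => j lt_j; rewrite coef_FS ?leqW //.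
case: j lt_j => [|m] lt_m; first lia.
rewrite !(F_coef0 l) ?mul0rn ?mulr0 ?subr0 ?addr0; try lia.
by case: l le_ln lt_m => [|l] le_ln lt_m //; rewrite F_coef0 //; lia.
Qed.

Lemma coef_F_top n l : (l <= n)%N -> (F n.+1 l)`_(n.+1 - l) =
  (if l is l'.+1 then (F n l')`_(n.+1 - l) else 0) - n.+1%:R * (F n l)`_(n - l).
Proof.
move=> le_ln; rewrite coef_FS; last exact: leqW.
have above_top : (F n l)`_(n - l).+2 = 0.
  by apply: nth_default; apply: leq_trans (size_F_le n l) _.
rewrite subSn // above_top mul0rn mulr0 subr0.
have -> : ((2 * n + 1)%:R - l%:R : int) = n.+1%:R + (n - l)%:R by lia.
by rewrite -addrA; congr (_ + _); ring.
Qed.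

Lemma F_top_sign n l : (l <= n)%N -> 0 < (-1) ^+ (n - l) * (F n l)`_(n - l).
Proof.
elim: n l => [|n IH] l le_l.
  by case: l le_l => // _; rewrite /= coef1 mul1r.
have [-> | ne_l] := eqVneq l n.+1; first by rewrite F_diag subnn coef1 mul1r.
have {le_l ne_l} le_ln : (l <= n)%N by lia.
have prev_sign :
    0 <= (-1) ^+ (n.+1 - l) * (if l is l'.+1 then (F n l')`_(n.+1 - l) else 0).
  case: l le_ln => [|l] le_ln; first by rewrite mulr0.
  exact/ltW/IH/ltnW.
rewrite coef_F_top //; move: prev_sign.
set prev := (if l is _.+1 then _ else _); rewrite subSn // => prev_sign.
have -> : (-1) ^+ (n - l).+1 * (prev - n.+1%:R * (F n l)`_(n - l)) =
    (-1) ^+ (n - l).+1 * prev + n.+1%:R * ((-1) ^+ (n - l) * (F n l)`_(n - l)).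
  by rewrite exprS; ring.
by rewrite ltr_wpDl // mulr_gt0 ?ltr0Sn ?IH.
Qed.

Lemma size_F_exact n l : (l <= n)%N -> size (F n l) = (n - l).+1.
Proof.
move=> le_ln; apply/eqP; rewrite eqn_leq size_F_le /=.
rewrite ltnNge; apply/negP => /leq_sizeP top0.
by have := F_top_sign n l le_ln; rewrite top0 // mulr0 ltxx.
Qed.

Theorem lemma6p3 :
  (forall i : nat, F i i = 1) /\
  (forall k i : nat, size (F (i + k) i) = k.+1) /\
  (forall i : nat, F i.+1 i = - (('C(i + 2, 2))%:R *: 'X)).
Proof.
split; first exact: F_diag.
split; last exact: F_subdiag.
by move=> k i; rewrite size_F_exact ?leq_addr // addKn.
Qed.
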